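(* Let $\mathbf M=(M,\vee_{\mathbf M},(\sqsubseteq^n_{\mathbf M})_{n\ge1})$ be a multi-argument specialization semilattice, let $M^{<\omega}$ be the set of finite subsets of $M$, and define on $M\times M^{<\omega}$ the relations $\precsim$ and $\sim$ as in the context. Then: (i) $\precsim$ is reflexive and transitive on $M\times M^{<\omega}$, hence $\sim$ is an equivalence relation. (ii) The operation $K[a,\{b_1,\dots,b_h\}]=[a,\{a\vee_{\mathbf M}b_1\vee_{\mathbf M}\dots\vee_{\mathbf M}b_h\}]$ on $\sim$-classes is well defined (here $[\cdot]$ denotes $\sim$-class). (iii) $\sim$ is a congruence of the semilattice $(M,\vee_{\mathbf M})\times(M^{<\omega},\cup)$, so the quotient $\widetilde M=(M\times M^{<\omega})/\!\sim$ inherits a semilattice operation $\vee$, given by $[a,\{b_1,\dots,b_h\}]\vee[c,\{d_1,\dots,d_k\}]=[a\vee_{\mathbf M}c,\{b_1,\dots,b_h,d_1,\dots,d_k\}]$; moreover, with $\le$ the order induced by $\vee$, $[a,\{b_1,\dots,b_h\}]\le[c,\{d_1,\dots,d_k\}]$ if and only if $(a,\{b_1,\dots,b_h\})\precsim(c,\{d_1,\dots,d_k\})$.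
   Context: A multi-argument specialization semilattice is a join semilattice $(M,\vee)$ (order $a\le b$ iff $a\vee b=b$) with, for each $n\ge1$, an $(n+1)$-ary relation $a\sqsubseteq^n b_1,\dots,b_n$ (also written $a\sqsubseteq b_1,\dots,b_n$) such that: (M1) $a\sqsubseteq a$; (M2) $a\sqsubseteq b_1,\dots,b_n$ and $b_1\sqsubseteq c$ imply $a\sqsubseteq c,b_2,\dots,b_n$; (M3) $a\le b$ and $b\sqsubseteq c_1,\dots,c_m$ imply $a\sqsubseteq c_1,\dots,c_m$; (M4) $a\sqsubseteq b_1,\dots,b_n$ implies $a\sqsubseteq b_{\sigma1},\dots,b_{\sigma n}$ for every permutation $\sigma$; (M5) $a\sqsubseteq b_1,\dots,b_n,b_n$ implies $a\sqsubseteq b_1,\dots,b_n$; (M6) $a\sqsubseteq b_1,\dots,b_n$ implies $a\sqsubseteq b_1,\dots,b_n,b_{n+1}$; (M7) $a\sqsubseteq b_1,\dots,b_n$ and $a_1\sqsubseteq b_1,\dots,b_n$ imply $a\vee a_1\sqsubseteq b_1,\dots,b_n$. Define $(a,\{b_1,\dots,b_h\})\precsim(c,\{d_1,\dots,d_k\})$ iff both: (a1) there is $d\in M$ with $d\sqsubseteq_{\mathbf M}d_1,\dots,d_k$ and $a\le_{\mathbf M}c\vee_{\mathbf M}d$ (when $k=0$, i.e. the set $\{d_1,\dots,d_k\}$ is empty, this clause reads simply $a\le_{\mathbf M}c$); and (a2) for every $i\le h$ there is $j\le k$ with $b_i\sqsubseteq^1_{\mathbf M}d_j$. Define $x\sim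 y$ iff $x\precsim y$ and $y\precsim x$. *)

From mathcomp Require Import all_boot.
From mathcomp Require Import finmap.
Set Implicit Arguments. Unset Strict Implicit. Unset Printing Implicit Defensive.
Local Open Scope fset_scope.

(* The family of relations
   a ⊑^n b_1,...,b_n (n >= 1) is encoded by one predicate
   spec a [:: b_1; ...; b_n], only constrained on nonempty lists. *)

Definition leM (M : Type) (join : M -> M -> M) (a b : M) : Prop := join a b = b.

Definition is_semilattice (M : Type) (join : M -> M -> M) : Prop :=
  (forall a b c, join a (join b c) = join (join a b) c) /\
  (forall a b, join a b = join b a) /\
  (forall a, join a a = a).

Definition is_mss (M : eqType) (join : M -> M -> M) (spec : M -> seq M -> Prop) : Prop :=
  is_semilattice join /\
  (* M1 *) (forall a, spec a [:: a]) /\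
  (* M2 *) (forall a b1 bs c, spec a (b1 :: bs) -> spec b1 [:: c] -> spec a (c :: bs)) /\
  (* M3 *) (forall a b cs, cs <> [::] -> leM join a b -> spec b cs -> spec a cs) /\
  (* M4 *) (forall a bs bs', bs <> [::] -> perm_eq bs bs' -> spec a bs -> spec a bs') /\
  (* M5 *) (forall a bs bn, spec a (rcons (rcons bs bn) bn) -> spec a (rcons bs bn)) /\
  (* M6 *) (forall a bs b, bs <> [::] -> spec a bs -> spec a (rcons bs b)) /\
  (* M7 *) (forall a a1 bs, bs <> [::] -> spec a bs -> spec a1 bs -> spec (join a a1) bs).

Section Precsim.
Variables (M : choiceType) (join : M -> M -> M) (spec : M -> seq M -> Prop).

Definition prec (x y : M * {fset M}) : Prop :=
  let: (a, B) := x in let: (c, D) := y in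
  (if D == fset0 then leM join a c
   else exists d, spec d (enum_fset D) /\ leM join a (join c d)) /\
  (forall b, b \in B -> exists2 d, d \in D & spec b [:: d]).

Definition sim (x y : M * {fset M}) : Prop := prec x y /\ prec y x.

Definition Kop (x : M * {fset M}) : M * {fset M} :=
  (x.1, [fset (foldr join x.1 (enum_fset x.2))]).

Definition pjoin (x y : M * {fset M}) : M * {fset M} :=
  (join x.1 y.1, x.2 `|` y.2).
End Precsim.

From mathcomp Require Import all_boot.
From mathcomp Require Import finmap.
Local Open Scope fset_scope.
Set Implicit Arguments. Unset Strict Implicit.

(* Split (a, B) ≾ (c, D) into "a is covered by c up to a joint
   specialization of D" and "every element of B specializes to one element of
   D".  The second relation is a preorder closed under unions; for fixed
   (c, D) the covered elements form a down-set closed under joins (M7), and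
   they are transported along refinements of D because M2 and M4 let every
   argument of d ⊑ d_1,...,d_k be replaced by an element it specializes to.
   So ≾ is a preorder in which pjoin is a least upper bound, which yields the
   congruence and the quotient order together.  For K, every d_j lies below
   top = c ∨ d_1 ∨ ... ∨ d_k and hence specializes to top (M3); then so do
   the witness d and, by M7, a ∨ b_1 ∨ ... ∨ b_h. *)

Section Semilattice.
Variables (T : Type) (join : T -> T -> T).
Hypothesis Hsl : is_semilattice join.

Lemma leM_refl a : leM join a a.
Proof. by case: Hsl => _ [_ jI]; apply: jI. Qed.

Lemma leM_trans a b c : leM join a b -> leM join b c -> leM join a c.
Proof. by case: Hsl => jA _; rewrite /leM => hab <-; rewrite jA hab. Qed.

Lemma leM_joinl a b : leM join a (join a b).
Proof. by case: Hsl => jA [_ jI]; rewrite /leM jA jI. Qed.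

Lemma leM_joinr a b : leM join b (join a b).
Proof. by case: Hsl => jA [jC jI]; rewrite /leM jA (jC b) -jA jI. Qed.

Lemma leM_join_lub a b c : leM join a c -> leM join b c -> leM join (join a b) c.
Proof. by case: Hsl => jA _; rewrite /leM => hac hbc; rewrite -jA hbc hac. Qed.

Lemma leM_join2l a b b' : leM join b b' -> leM join (join a b) (join a b').
Proof.
move=> hbb'; apply: leM_join_lub; first exact: leM_joinl.
exact: leM_trans hbb' (leM_joinr _ _).
Qed.

End Semilattice.

Section SemilatticeFold.
Variables (T : eqType) (join : T -> T -> T).
Hypothesis Hsl : is_semilattice join.

Lemma leM_foldr_init c s : leM join c (foldr join c s).
Proof.
elim: s => [|x s IH] /=; first exact: (leM_refl Hsl c).
exact: (leM_trans Hsl IH (leM_joinr Hsl _ _)).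
Qed.

Lemma leM_foldr_mem c s z : z \in s -> leM join z (foldr join c s).
Proof.
elim: s => [|x s IH] //=; rewrite inE => /orP [/eqP ->|zs]; first exact: (leM_joinl Hsl _ _).
exact: (leM_trans Hsl (IH zs) (leM_joinr Hsl _ _)).
Qed.

End SemilatticeFold.

Section SpecLists.
Variables (M : eqType) (join : M -> M -> M) (spec : M -> seq M -> Prop).
Hypothesis HM : is_mss join spec.

Let spec_refl : forall a, spec a [:: a] := HM.2.1.
Let spec_trans_head : forall a b bs c, spec a (b :: bs) -> spec b [:: c] -> spec a (c :: bs)
  := HM.2.2.1.
Let spec_antitone : forall a b cs, cs <> [::] -> leM join a b -> spec b cs -> spec a cs
  := HM.2.2.2.1.
Let spec_perm : forall a bs bs', bs <> [::] -> perm_eq bs bs' -> spec a bs -> spec a bs'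
  := HM.2.2.2.2.1.
Let spec_contract : forall a bs b, spec a (rcons (rcons bs b) b) -> spec a (rcons bs b)
  := HM.2.2.2.2.2.1.
Let spec_rcons : forall a bs b, bs <> [::] -> spec a bs -> spec a (rcons bs b)
  := HM.2.2.2.2.2.2.1.
Let spec_join : forall a a1 bs, bs <> [::] -> spec a bs -> spec a1 bs -> spec (join a a1) bs
  := HM.2.2.2.2.2.2.2.

Lemma spec1_le a b : leM join a b -> spec a [:: b].
Proof. by move=> hab; apply: spec_antitone hab (spec_refl b). Qed.

Lemma spec_catr s t a : s <> [::] -> spec a s -> spec a (s ++ t).
Proof.
elim: t s => [|y t IH] s s_ne h; first by rewrite cats0.
rewrite -cat_rcons; apply: IH; first by case: (s).
exact: spec_rcons.
Qed.

Lemma spec_dup_head x s a : x \in s -> spec a (x :: s) -> spec a s.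
Proof.
move=> xs h.
have s_ne : s <> [::] by move=> s0; rewrite s0 in xs.
have s_rem : perm_eq s (x :: rem x s) := perm_to_rem xs.
apply: (spec_perm (bs := rcons (rem x s) x)); first by case: (rem x s).
  by rewrite perm_rcons perm_sym.
apply: spec_contract; apply: (spec_perm _ _ h) => //.
by rewrite perm_sym perm_rcons perm_cons perm_rcons perm_sym.
Qed.

Lemma spec_subset s t a : s <> [::] -> {subset s <= t} -> spec a s -> spec a t.
Proof.
move=> s_ne st /(spec_catr t s_ne); elim: s {s_ne} st => [//|x s IH] st h.
apply: IH => [z zs|]; first by apply: st; rewrite inE zs orbT.
by apply: spec_dup_head h; rewrite mem_cat st ?mem_head ?orbT.
Qed.

(* Each b_i is replaced in turn by a specialization d_i (M2 after a
   permutation); the d_i already placed are kept in the accumulator P. *)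
Lemma spec_refine s t a : s <> [::] ->
  (forall b, b \in s -> exists2 d, d \in t & spec b [:: d]) -> spec a s -> spec a t.
Proof.
suff acc P : {subset P <= t} -> s ++ P <> [::] -> spec a (s ++ P) ->
    (forall b, b \in s -> exists2 d, d \in t & spec b [:: d]) -> spec a t.
  by move=> s_ne hs h; apply: (acc [::]); rewrite ?cats0.
elim: s P => [|b s IH] P Pt ne h hs; first exact: spec_subset ne Pt h.
have [d dt hbd] := hs b (mem_head _ _).
have h' : spec a (s ++ d :: P).
  apply: (spec_perm (bs := d :: s ++ P)) => //.
    by rewrite -[d :: _]cat1s perm_catCA.
  exact: spec_trans_head h hbd.
apply: (IH (d :: P)) h' _ => [z||z zs]; first by rewrite inE => /orP [/eqP ->|/Pt].
- by case: (s).
- by apply: hs; rewrite inE zs orbT.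
Qed.

Lemma spec1_trans a b c : spec a [:: b] -> spec b [:: c] -> spec a [:: c].
Proof. exact: spec_trans_head. Qed.

Lemma spec_foldr e a s : spec a [:: e] -> (forall b, b \in s -> spec b [:: e]) ->
  spec (foldr join a s) [:: e].
Proof.
elim: s => [|x s IH] //= ha hs.
apply: spec_join => //; first by apply: hs; rewrite mem_head.
by apply: IH => // b bs; apply: hs; rewrite inE bs orbT.
Qed.

Lemma spec_cover a c d bs : bs <> [::] -> spec c bs -> spec d bs ->
  leM join a (join c d) -> spec a bs.
Proof. by move=> ne hc hd hle; apply: spec_antitone hle (spec_join ne hc hd). Qed.

End SpecLists.

Section Precsim.
Variables (M : choiceType) (join : M -> M -> M) (spec : M -> seq M -> Prop).
Hypothesis HM : is_mss join spec.

Let Hsl : is_semilattice join := HM.1.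
Let spec_join : forall a a1 bs, bs <> [::] -> spec a bs -> spec a1 bs -> spec (join a a1) bs
  := HM.2.2.2.2.2.2.2.

Definition covered (c : M) (D : {fset M}) (a : M) : Prop :=
  if D == fset0 then leM join a c
  else exists d, spec d (enum_fset D) /\ leM join a (join c d).

Definition refines (B D : {fset M}) : Prop :=
  forall b, b \in B -> exists2 d, d \in D & spec b [:: d].

Lemma precE a B c D : prec join spec (a, B) (c, D) <-> covered c D a /\ refines B D.
Proof. by []. Qed.

Lemma enum_fset_neq0 (D : {fset M}) : D != fset0 -> enum_fset D <> [::].
Proof. by move=> /fset0Pn [x xD] D0; have : x \in enum_fset D by []; rewrite D0. Qed.

Lemma spec_fset_mem (D : {fset M}) e : e \in D -> spec e (enum_fset D).
Proof.
move=> eD; apply: (spec_subset HM (s := [:: e])) => // [z|].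
  by rewrite inE => /eqP ->.
exact/(spec1_le HM)/(leM_refl Hsl).
Qed.

Lemma spec_fset1 a x : spec a (enum_fset [fset x]) <-> spec a [:: x].
Proof. by rewrite -fset_seq1. Qed.

Lemma leM_covered c D a : leM join a c -> covered c D a.
Proof.
rewrite /covered; case: eqP => // /eqP /fset0Pn [e eD] hac.
exists e; split; first exact: spec_fset_mem.
exact: (leM_trans Hsl hac (leM_joinl Hsl _ _)).
Qed.

Lemma leM_covered_trans c D a a' : leM join a a' -> covered c D a' -> covered c D a.
Proof.
rewrite /covered; case: eqP => _ ha; first exact: (leM_trans Hsl ha).
by move=> [d [hd hle]]; exists d; split => //; apply: (leM_trans Hsl ha hle).
Qed.

Lemma covered_spec c D d : D != fset0 -> spec d (enum_fset D) -> covered c D d.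
Proof.
by rewrite /covered => /negbTE -> hd; exists d; split => //; apply: (leM_joinr Hsl).
Qed.

Lemma covered_join c D a a' : covered c D a -> covered c D a' -> covered c D (join a a').
Proof.
rewrite /covered; case: eqP => [_|/eqP D0]; first exact: (leM_join_lub Hsl).
move=> [d [hd hle]] [d' [hd' hle']]; exists (join d d'); split.
  exact: spec_join (enum_fset_neq0 D0) hd hd'.
apply: (leM_join_lub Hsl).
  exact: (leM_trans Hsl hle (leM_join2l Hsl _ (leM_joinl Hsl d d'))).
exact: (leM_trans Hsl hle' (leM_join2l Hsl _ (leM_joinr Hsl d d'))).
Qed.

Lemma refines_trans B D F : refines B D -> refines D F -> refines B F.
Proof.
move=> hBD hDF b /hBD [d /hDF [f fF hdf] hbd].
by exists f => //; apply: (spec1_trans HM hbd hdf).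
Qed.

Lemma refines_fsubset B D : B `<=` D -> refines B D.
Proof.
move=> /fsubsetP BD b bB; exists b; first exact: BD.
exact/(spec1_le HM)/(leM_refl Hsl).
Qed.

Lemma refines_fsetU B D F : refines B F -> refines D F -> refines (B `|` D) F.
Proof. by move=> hB hD b; rewrite in_fsetU => /orP [/hB|/hD]. Qed.

Lemma refines_neq0 D F : refines D F -> D != fset0 -> F != fset0.
Proof. by move=> hDF /fset0Pn [d /hDF [f fF _]]; apply/fset0Pn; exists f. Qed.

Lemma spec_refines d D F : D != fset0 -> refines D F ->
  spec d (enum_fset D) -> spec d (enum_fset F).
Proof.
move=> D0 hDF; apply: (spec_refine HM (enum_fset_neq0 D0)) => b /hDF [f fF hbf].
by exists f.
Qed.

Lemma covered_trans c D e F a :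
  covered c D a -> covered e F c -> refines D F -> covered e F a.
Proof.
rewrite {1}/covered; case: eqP => [_ hac hc _|/eqP D0 [d [hd hle]] hc hDF].
  exact: leM_covered_trans hac hc.
have F0 := refines_neq0 hDF D0.
apply: leM_covered_trans hle (covered_join hc (covered_spec _ F0 _)).
exact: spec_refines hDF hd.
Qed.

Lemma prec_refl x : prec join spec x x.
Proof.
case: x => a B; split; first exact/leM_covered/(leM_refl Hsl).
exact/refines_fsubset/fsubset_refl.
Qed.

Lemma prec_trans x y z : prec join spec x y -> prec join spec y z -> prec join spec x z.
Proof.
case: x y z => [a B] [c D] [e F] [hac hBD] [hce hDF]; split.
  exact: covered_trans hac hce hDF.
exact: refines_trans hBD hDF.
Qed.

Lemma prec_pjoinl x y : prec join spec x (pjoin join x y).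
Proof.
case: x y => [a B] [c D]; split; first exact/leM_covered/(leM_joinl Hsl).
exact/refines_fsubset/fsubsetUl.
Qed.

Lemma prec_pjoinr x y : prec join spec y (pjoin join x y).
Proof.
case: x y => [a B] [c D]; split; first exact/leM_covered/(leM_joinr Hsl).
exact/refines_fsubset/fsubsetUr.
Qed.

Lemma prec_pjoin_lub x y z :
  prec join spec x z -> prec join spec y z -> prec join spec (pjoin join x y) z.
Proof.
case: x y z => [a B] [c D] [e F] [hae hBF] [hce hDF]; split.
  exact: covered_join.
exact: refines_fsetU.
Qed.

Lemma prec_pjoin x x' y y' : prec join spec x x' -> prec join spec y y' ->
  prec join spec (pjoin join x y) (pjoin join x' y').
Proof.
move=> hx hy; apply: prec_pjoin_lub.
  exact: prec_trans hx (prec_pjoinl _ _).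
exact: prec_trans hy (prec_pjoinr _ _).
Qed.

Lemma prec_Kop x y : prec join spec x y -> prec join spec (Kop join x) (Kop join y).
Proof.
case: x y => [a B] [c D] [hac hBD]; rewrite /Kop /=.
set top := foldr join c (enum_fset D).
have spec_top b : leM join b top -> spec b [:: top] by apply: (spec1_le HM).
have hDtop : forall b, b \in D -> spec b [:: top].
  by move=> b bD; apply/spec_top/(leM_foldr_mem Hsl).
have top0 : [fset top] != fset0 by apply/fset0Pn; exists top; rewrite in_fset1.
have hac' : covered c [fset top] a.
  apply: covered_trans hac (leM_covered _ (leM_refl Hsl c)) _.
  by move=> b bD; exists top; [rewrite in_fset1 | apply: hDtop].
apply/precE; split => // b; rewrite in_fset1 => /eqP ->; exists top; rewrite ?in_fset1 //.
apply: (spec_foldr HM).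
  move: hac'; rewrite /covered (negbTE top0) => -[d [/spec_fset1 hd hle]].
  by apply: (spec_cover HM _ (spec_top _ (leM_foldr_init Hsl _ _)) hd hle).
move=> b' /hBD [d dD hbd]; exact: (spec1_trans HM hbd (hDtop d dD)).
Qed.

End Precsim.

Theorem lemma4p5 (M : choiceType) (join : M -> M -> M) (spec : M -> seq M -> Prop)
  (HM : is_mss join spec) :
  (* (i) *)
  (forall x, prec join spec x x) /\
  (forall x y z, prec join spec x y -> prec join spec y z -> prec join spec x z) /\
  (forall x, sim join spec x x) /\
  (forall x y, sim join spec x y -> sim join spec y x) /\
  (forall x y z, sim join spec x y -> sim join spec y z -> sim join spec x z) /\
  (* (ii) *)
  (forall x y, sim join spec x y -> sim join spec (Kop join x) (Kop join y)) /\
  (* (iii) congruence *)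
  (forall x x' y y', sim join spec x x' -> sim join spec y y' ->
     sim join spec (pjoin join x y) (pjoin join x' y')) /\
  (* (iii) order of the quotient: [x] <= [y] iff [x] ∨ [y] = [y] iff x ≾ y *)
  (forall x y, sim join spec (pjoin join x y) y <-> prec join spec x y).
Proof.
have refl := prec_refl HM; have trans := prec_trans HM.
do 2!split => //.
split; first by move=> x; split.
split; first by move=> x y [].
split; first by move=> x y z [hxy hyx] [hyz hzy]; split; [apply: trans hyz | apply: trans hyx].
split; first by move=> x y [hxy hyx]; split; apply: prec_Kop.
split; first by move=> x x' y y' [hx hx'] [hy hy']; split; apply: prec_pjoin.
move=> x y; split; first by move=> [h _]; apply: trans h; apply: prec_pjoinl.
by move=> hxy; split; [apply: prec_pjoin_lub | apply: prec_pjoinr].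
Qed.
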